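(* Let $n\ge3$, $K\ge1$, and $\underline a=(a_1,\dots,a_K)\in(\mathbb{C}^\times)^K$ with $a_k\neq a_j^{\pm1}$ for all $k\neq j$. If $a_k\neq\pm1$ for every $k$, then $\psi_{\underline a}:\mathrm{gim}(M_n)\to sl_{2n}^{\oplus K}$ is surjective.
   Context: For $n\geq 3$, $M_n=(m_{i,j})$ is the $n\times n$ integer matrix with $m_{i,i}=2$, $m_{i,i+1}=m_{i+1,i}=-1$ ($1\le i\le n-1$), $m_{1,n}=m_{n,1}=1$, all other entries $0$. $\mathrm{gim}(M_n)$ is the complex Lie algebra generated by $e_i,f_i,h_i$ ($1\le i\le n$) with relations: (R1) $[h_i,e_j]=m_{i,j}e_j$, $[h_i,f_j]=-m_{i,j}f_j$, $[e_i,f_i]=h_i$ for all $i,j$; (R2) for $i\ne j$ with $m_{i,j}\le0$: $[e_i,f_j]=0=[f_i,e_j]$, $(\mathrm{ad}\,e_i)^{1-m_{i,j}}e_j=0=(\mathrm{ad}\,f_i)^{1-m_{i,j}}f_j$; (R3) for $i\ne j$ with $m_{i,j}>0$: $[e_i,e_j]=0=[f_i,f_j]$, $(\mathrm{ad}\,e_i)^{m_{i,j}+1}f_j=0=(\mathrm{ad}\,f_i)^{m_{i,j}+1}e_j$. For $a\in\mathbb{C}^\times$, $\psi_a:\mathrm{gim}(M_n)\to sl_{2n}$ is the Lie algebra homomorphism determined by $\psi_a(e_i)=E_{i,i+1}-E_{n+i+1,n+i}$, $\psi_a(f_i)=E_{i+1,i}-E_{n+i,n+i+1}$ ($1\le i\le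 n-1$), $\psi_a(e_n)=E_{n,n+1}+a^{-1}E_{1,2n}$, $\psi_a(f_n)=E_{n+1,n}+aE_{2n,1}$, where $E_{i,j}$ are matrix units. For $\underline a=(a_1,\dots,a_K)$, $\psi_{\underline a}=\bigoplus_{k=1}^K\psi_{a_k}:\mathrm{gim}(M_n)\to sl_{2n}^{\oplus K}$, $x\mapsto(\psi_{a_1}(x),\dots,\psi_{a_K}(x))$. *)

From HB Require Import structures.
From mathcomp Require Import all_boot all_order all_algebra.
From mathcomp Require Import complex.
From mathcomp Require Import reals.
Set Implicit Arguments. Unset Strict Implicit. Unset Printing Implicit Defensive.
Import Order.TTheory GRing.Theory Num.Theory.
Local Open Scope ring_scope.
Local Open Scope complex_scope.

Section Defs.
Variables (R : realType) (n : nat).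
Local Notation C := (R[i]).
Local Notation M := 'M[C]_(2 * n).

(* Matrix unit E_{i,j}, with 1-based indices i, j in {1, ..., 2n}. *)
Definition Eu (i j : nat) : M :=
  \matrix_(r, c) (((r : nat) == i.-1) && ((c : nat) == j.-1))%:R.

Definition psi_e (a : C) (i : nat) : M :=
  if (i < n)%N then Eu i i.+1 - Eu (n + i + 1)%N (n + i)%N
  else Eu n n.+1 + a^-1 *: Eu 1 (2 * n)%N.
Definition psi_f (a : C) (i : nat) : M :=
  if (i < n)%N then Eu i.+1 i - Eu (n + i)%N (n + i + 1)%N
  else Eu n.+1 n + a *: Eu (2 * n)%N 1.
Definition psi_h (a : C) (i : nat) : M :=
  psi_e a i *m psi_f a i - psi_f a i *m psi_e a i.
End Defs.

Definition lie_br (R : realType) (n K : nat)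
  (x y : {ffun 'I_K -> 'M[R[i]]_(2 * n)}) : {ffun 'I_K -> 'M[R[i]]_(2 * n)} :=
  [ffun k => x k *m y k - y k *m x k].

Inductive lie_gen (R : realType) (n K : nat)
  (S : {ffun 'I_K -> 'M[R[i]]_(2 * n)} -> Prop)
  : {ffun 'I_K -> 'M[R[i]]_(2 * n)} -> Prop :=
| lie_gen_base x : S x -> lie_gen S x
| lie_gen_zero : lie_gen S 0
| lie_gen_add x y : lie_gen S x -> lie_gen S y -> lie_gen S (x + y)
| lie_gen_scale (c : R[i]) x : lie_gen S x -> lie_gen S (c *: x)
| lie_gen_br x y : lie_gen S x -> lie_gen S y -> lie_gen S (lie_br x y).

Definition psi_gens (R : realType) (n K : nat) (a : 'I_K -> R[i])
  (x : {ffun 'I_K -> 'M[R[i]]_(2 * n)}) : Prop :=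
  exists2 i : nat, (1 <= i <= n)%N &
    [\/ x = [ffun k => psi_e n (a k) i],
        x = [ffun k => psi_f n (a k) i] |
        x = [ffun k => psi_h n (a k) i]].

(* Image of psi_{a} : gim(M_n) -> sl_{2n}^{(+)K}; since gim(M_n) is generated
   as a Lie algebra by the e_i, f_i, h_i, this is the Lie subalgebra generated
   by their images. *)
Definition psi_image (R : realType) (n K : nat) (a : 'I_K -> R[i]) :=
  lie_gen (@psi_gens R n K a).

Definition sl_sum (R : realType) (n K : nat) (x : {ffun 'I_K -> 'M[R[i]]_(2 * n)}) :=
  forall k, \tr (x k) = 0.

(* Bracketing psi(e_n) successively with psi(e_(n-1)), ..., psi(e_1) yields
   the element X_e whose k-th component is (1 + a_k^-1) E_(1,n+1); likewise
   the psi(f_i) yield X_f with components (1 + a_k) E_(n+1,1).  In each summand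
   X_e, X_f span a copy of sl_2, and ad [X_e, X_f] acts on X_e componentwise by
   the scalar w_k = 2 (1 + a_k)(1 + a_k^-1) = 2 (2 + a_k + a_k^-1).  Hence the
   image contains the element with components p(w_k) (1 + a_k^-1) E_(1,n+1)
   for every polynomial p.  Since a_k <> a_j^(+-1) the w_k are pairwise
   distinct, and since a_k <> -1 the factors 1 + a_k^(+-1) are nonzero, so
   Lagrange interpolation isolates E_(1,n+1) in a single summand.  Inside one
   summand, brackets with the psi(e_i), psi(f_i) reach the first row and
   column of each block (a_k <> 1 splits off the corners E_(1,2n) and
   E_(2n,1)), hence every off-diagonal matrix unit, hence all of sl_(2n). *)

From HB Require Import structures.
From mathcomp Require Import all_boot all_order all_algebra.
From mathcomp Require Import complex reals.
From mathcomp Require Import zify ring.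
Set Implicit Arguments. Unset Strict Implicit. Unset Printing Implicit Defensive.
Import Order.TTheory GRing.Theory Num.Theory.
Local Open Scope ring_scope.

Section MatrixUnits.
Variables (R : realType) (n : nat).
Local Notation C := (R[i]).
Local Notation M := 'M[C]_(2 * n).
Local Notation E := (@Eu R n).

Definition brmx (A B : M) : M := A *m B - B *m A.

Lemma brmxZl c A B : brmx (c *: A) B = c *: brmx A B.
Proof. by rewrite /brmx -scalemxAl -scalemxAr scalerBr. Qed.

Lemma brmxZr c A B : brmx A (c *: B) = c *: brmx A B.
Proof. by rewrite /brmx -scalemxAl -scalemxAr scalerBr. Qed.

Lemma delta_mxE (i j : 'I_(2 * n)) : delta_mx i j = E i.+1 j.+1.
Proof. by apply/matrixP => x y; rewrite !mxE. Qed.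

Lemma mul_Eu p q r s :
  E p q *m E r s = ((q.-1 == r.-1) && (q.-1 < 2 * n)%N)%:R *: E p s.
Proof.
apply/matrixP => x y; rewrite !mxE.
under eq_bigr => t _ do rewrite !mxE.
case: (ltnP q.-1 (2 * n)) => hq.
- rewrite (bigD1 (Ordinal hq)) //= big1 ?addr0; last first.
    by move=> t /negbTE; rewrite -val_eqE /= => ->; rewrite andbF mul0r.
  rewrite eqxx /= andbT.
  by case: (_ == p.-1); case: (_ == s.-1); case: (q.-1 == r.-1);
    rewrite /= ?mulr1 ?mul0r ?mulr0.
- rewrite big1 ?andbF ?mul0r // => t _.
  have /negbTE -> : (t : nat) != q.-1 by apply/eqP => h; have := ltn_ord t; lia.
  by rewrite andbF mul0r.
Qed.

Ltac decide_nat_conds :=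
  repeat match goal with
  | |- context [@eq_op ?T ?u ?v] =>
       first [ rewrite (_ : (u == v) = true); [| by apply/eqP; lia]
             | rewrite (_ : (u == v) = false); [| by apply/eqP; lia] ]
  | |- context [leq ?u ?v] =>
       first [ rewrite (_ : (u <= v)%N = true); [| by lia]
             | rewrite (_ : (u <= v)%N = false); [| by lia] ]
  end.

Ltac split_nat_conds :=
  repeat match goal with
  | |- context [@eq_op ?T ?u ?v] =>
       first [ rewrite (_ : (u == v) = true); [| by apply/eqP; lia]
             | rewrite (_ : (u == v) = false); [| by apply/eqP; lia]
             | case: (u =P v) => ? ]
  | |- context [leq ?u ?v] =>
       first [ rewrite (_ : (u <= v)%N = true); [| by lia]
             | rewrite (_ : (u <= v)%N = false); [| by lia]
             | case: (leqP u v) => ? ]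
  end.

(* Proves an identity between linear combinations of products of matrix
   units: multiply out with [mul_Eu], then compare entries, splitting on every
   index comparison that lia cannot decide. *)
Ltac Eu_ring :=
  rewrite ?(mulmxDl, mulmxDr, mulmxBl, mulmxBr, mulNmx, mulmxN);
  rewrite -?scalemxAl -?scalemxAr ?mul_Eu; decide_nat_conds;
  rewrite /= ?(scale1r, scale0r, addr0, add0r, subr0, sub0r, oppr0);
  apply/matrixP => ? ?; rewrite !mxE; split_nat_conds; rewrite /=; ring.

Lemma brmx_Eu p q r s : (1 <= p <= 2 * n)%N -> (1 <= q <= 2 * n)%N ->
  (1 <= r <= 2 * n)%N -> (1 <= s <= 2 * n)%N ->
  brmx (E p q) (E r s) = (q == r)%:R *: E p s - (s == p)%:R *: E r q.
Proof. move=> *; rewrite /brmx; Eu_ring. Qed.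

Lemma brmx_Eu_chain p q r : (1 <= p <= 2 * n)%N -> (1 <= q <= 2 * n)%N ->
  (1 <= r <= 2 * n)%N -> r != p -> brmx (E p q) (E q r) = E p r.
Proof.
by move=> hp hq hr /negbTE hrp; rewrite brmx_Eu // eqxx hrp scale1r scale0r subr0.
Qed.

Definition sl2_e : M := E 1 (n + 1).
Definition sl2_f : M := E (n + 1) 1.
Definition sl2_h : M := E 1 1 - E (n + 1) (n + 1).

Lemma brmx_sl2_ef : (1 <= n)%N -> brmx sl2_e sl2_f = sl2_h.
Proof. move=> hn; rewrite /brmx /sl2_e /sl2_f /sl2_h; Eu_ring. Qed.

Lemma brmx_sl2_he : (1 <= n)%N -> brmx sl2_h sl2_e = 2%:R *: sl2_e.
Proof. move=> hn; rewrite /brmx /sl2_e /sl2_h; Eu_ring. Qed.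

Lemma brmx_sl2_hf : (1 <= n)%N -> brmx sl2_h sl2_f = - (2%:R *: sl2_f).
Proof. move=> hn; rewrite /brmx /sl2_f /sl2_h; Eu_ring. Qed.

Definition chain_e (a : C) m : M := E m (n + 1) + a^-1 *: E 1 (n + m).
Definition chain_f (a : C) m : M := E (n + 1) m + a *: E (n + m) 1.

Lemma psi_e_last (a : C) : psi_e n a n = chain_e a n.
Proof. rewrite /chain_e /psi_e ltnn; Eu_ring. Qed.

Lemma psi_f_last (a : C) : psi_f n a n = chain_f a n.
Proof. rewrite /chain_f /psi_f ltnn; Eu_ring. Qed.

Lemma brmx_psi_e_chain (a : C) m : (1 <= m < n)%N ->
  brmx (psi_e n a m) (chain_e a m.+1) = chain_e a m.
Proof. move=> hm; rewrite /brmx /chain_e /psi_e ifT; [Eu_ring | lia]. Qed.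

Lemma brmx_chain_psi_f (a : C) m : (1 <= m < n)%N ->
  brmx (chain_f a m.+1) (psi_f n a m) = chain_f a m.
Proof. move=> hm; rewrite /brmx /chain_f /psi_f ifT; [Eu_ring | lia]. Qed.

Lemma chain_e1 (a : C) : chain_e a 1 = (1 + a^-1) *: sl2_e.
Proof. by rewrite /chain_e /sl2_e scalerDl scale1r addn1. Qed.

Lemma chain_f1 (a : C) : chain_f a 1 = (1 + a) *: sl2_f.
Proof. by rewrite /chain_f /sl2_f scalerDl scale1r addn1. Qed.

Definition cross_e j : M := E j (n + 1) + E 1 (n + j).
Definition cross_f j : M := E (n + 1) j + E (n + j) 1.

Lemma brmx_psi_f_sl2_e (a : C) : (2 <= n)%N ->
  brmx (psi_f n a 1) sl2_e = cross_e 2.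
Proof. move=> hn; rewrite /brmx /cross_e /sl2_e /psi_f ifT; [Eu_ring | lia]. Qed.

Lemma brmx_psi_f_cross (a : C) j : (2 <= j < n)%N ->
  brmx (psi_f n a j) (cross_e j) = cross_e j.+1.
Proof. move=> hj; rewrite /brmx /cross_e /psi_f ifT; [Eu_ring | lia]. Qed.

Lemma brmx_sl2_f_psi_e (a : C) : (2 <= n)%N ->
  brmx sl2_f (psi_e n a 1) = cross_f 2.
Proof. move=> hn; rewrite /brmx /cross_f /sl2_f /psi_e ifT; [Eu_ring | lia]. Qed.

Lemma brmx_cross_psi_e (a : C) j : (2 <= j < n)%N ->
  brmx (cross_f j) (psi_e n a j) = cross_f j.+1.
Proof. move=> hj; rewrite /brmx /cross_f /psi_e ifT; [Eu_ring | lia]. Qed.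

Lemma brmx_sl2_h_psi_e_last (a : C) : (2 <= n)%N ->
  brmx sl2_h (psi_e n a n) = E n (n + 1) + a^-1 *: E 1 (n + n).
Proof. move=> hn; rewrite psi_e_last /brmx /chain_e /sl2_h; Eu_ring. Qed.

Lemma brmx_sl2_h_psi_f_last (a : C) : (2 <= n)%N ->
  brmx sl2_h (psi_f n a n) = - (E (n + 1) n + a *: E (n + n) 1).
Proof. move=> hn; rewrite psi_f_last /brmx /chain_f /sl2_h; Eu_ring. Qed.

Lemma brmx_psi_e_row1 (a : C) j : (1 <= j < n)%N ->
  brmx (psi_e n a j) (E 1 (n + j.+1)) = E 1 (n + j).
Proof. move=> hj; rewrite /brmx /psi_e ifT; [Eu_ring | lia]. Qed.

Lemma brmx_psi_e_colS (a : C) j : (1 <= j < n)%N ->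
  brmx (psi_e n a j) (E j.+1 (n + 1)) = E j (n + 1).
Proof. move=> hj; rewrite /brmx /psi_e ifT; [Eu_ring | lia]. Qed.

Lemma brmx_psi_f_col1 (a : C) j : (1 <= j < n)%N ->
  brmx (psi_f n a j) (E (n + j.+1) 1) = - E (n + j) 1.
Proof. move=> hj; rewrite /brmx /psi_f ifT; [Eu_ring | lia]. Qed.

Lemma brmx_rowS_psi_f (a : C) j : (1 <= j < n)%N ->
  brmx (E (n + 1) j.+1) (psi_f n a j) = E (n + 1) j.
Proof. move=> hj; rewrite /brmx /psi_f ifT; [Eu_ring | lia]. Qed.

End MatrixUnits.

Lemma range_ind_down (P : nat -> Prop) lo hi : P hi ->
  (forall j, (lo <= j < hi)%N -> P j.+1 -> P j) ->
  forall j, (lo <= j <= hi)%N -> P j.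
Proof.
move=> Phi step.
have Pdown d : (d <= hi - lo)%N -> P (hi - d)%N.
  elim: d => [|d IH] hd; first by rewrite subn0.
  apply: step; first by lia.
  have -> : (hi - d.+1).+1 = (hi - d)%N by lia.
  by apply: IH; lia.
move=> j hj; have -> : j = (hi - (hi - j))%N by lia.
by apply: Pdown; lia.
Qed.

Lemma range_ind_up (P : nat -> Prop) lo hi : P lo ->
  (forall j, (lo <= j < hi)%N -> P j -> P j.+1) ->
  forall j, (lo <= j <= hi)%N -> P j.
Proof.
move=> Plo step.
have Pup d : (lo + d <= hi)%N -> P (lo + d)%N.
  elim: d => [|d IH] hd; first by rewrite addn0.
  by rewrite addnS; apply: step; [lia | apply: IH; lia].
move=> j hj; have -> : j = (lo + (j - lo))%N by lia.
by apply: Pup; lia.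
Qed.

Lemma lie_brE (R : realType) (n K : nat)
    (x y : {ffun 'I_K -> 'M[R[i]]_(2 * n)}) k :
  lie_br x y k = brmx (x k) (y k).
Proof. by rewrite ffunE. Qed.

Section LieGenComponent.
Variables (R : realType) (n K : nat).
Variable G : {ffun 'I_K -> 'M[R[i]]_(2 * n)} -> Prop.
Local Notation M := 'M[R[i]]_(2 * n).
Local Notation FM := {ffun 'I_K -> M}.
Local Notation L := (lie_gen G).

Definition comp_mx k (A : M) : FM := [ffun j => if j == k then A else 0].

Definition gen_at k (A : M) := L (comp_mx k A).

Lemma gen_at0 k : gen_at k 0.
Proof.
rewrite /gen_at (_ : comp_mx k 0 = 0); first exact: lie_gen_zero.
by apply/ffunP => j; rewrite !ffunE; case: ifP.
Qed.

Lemma gen_atD k A B : gen_at k A -> gen_at k B -> gen_at k (A + B).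
Proof.
move=> hA hB; have := lie_gen_add hA hB; congr lie_gen.
by apply/ffunP => j; rewrite !ffunE; case: ifP; rewrite ?addr0.
Qed.

Lemma gen_atZ k c A : gen_at k A -> gen_at k (c *: A).
Proof.
move=> hA; have := lie_gen_scale c hA; congr lie_gen.
by apply/ffunP => j; rewrite !ffunE; case: ifP; rewrite ?scaler0.
Qed.

Lemma gen_atZ_inv k c A : c != 0 -> gen_at k (c *: A) -> gen_at k A.
Proof. by move=> hc /(gen_atZ c^-1); rewrite scalerA mulVf // scale1r. Qed.

Lemma gen_atN k A : gen_at k A -> gen_at k (- A).
Proof. by move/(gen_atZ (-1)); rewrite scaleN1r. Qed.

Lemma gen_atB k A B : gen_at k A -> gen_at k B -> gen_at k (A - B).
Proof. by move=> hA /gen_atN; apply: gen_atD. Qed.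

Lemma gen_at_brl k A X : gen_at k A -> L X -> gen_at k (brmx (X k) A).
Proof.
move=> hA hX; have := lie_gen_br hX hA; congr lie_gen.
apply/ffunP => j; rewrite !ffunE; case: (j =P k) => [-> //|_].
by rewrite /brmx mulmx0 mul0mx subrr.
Qed.

Lemma gen_at_brr k A X : gen_at k A -> L X -> gen_at k (brmx A (X k)).
Proof.
move=> hA hX; have := lie_gen_br hA hX; congr lie_gen.
apply/ffunP => j; rewrite !ffunE; case: (j =P k) => [-> //|_].
by rewrite /brmx mulmx0 mul0mx subrr.
Qed.

Lemma gen_at_br k A B : gen_at k A -> gen_at k B -> gen_at k (brmx A B).
Proof. by move=> hA hB; have := gen_at_brr hA hB; rewrite ffunE eqxx. Qed.

Lemma lie_gen_components (x : FM) : (forall k, gen_at k (x k)) -> L x.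
Proof.
move=> hx; have -> : x = \sum_k comp_mx k (x k).
  apply/ffunP => j; rewrite sum_ffunE (bigD1 j) //= ffunE eqxx big1 ?addr0 //.
  by move=> k; rewrite ffunE eq_sym => /negbTE ->.
apply: (big_ind L); [exact: lie_gen_zero | exact: lie_gen_add |].
by move=> k _; apply: hx.
Qed.

End LieGenComponent.

Section SlGeneration.
Variables (R : realType) (n : nat) (P : 'M[R[i]]_(2 * n) -> Prop).
Hypothesis P0 : P 0.
Hypothesis PD : forall A B, P A -> P B -> P (A + B).
Hypothesis PZ : forall c A, P A -> P (c *: A).
Hypothesis Pbr : forall A B, P A -> P B -> P (brmx A B).
Local Notation E := (@Eu R n).

Section OffDiagonal.
Hypothesis P_row1 : forall j, (1 <= j <= n)%N -> P (E 1 (n + j)).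
Hypothesis P_colS : forall j, (1 <= j <= n)%N -> P (E j (n + 1)).
Hypothesis P_col1 : forall j, (1 <= j <= n)%N -> P (E (n + j) 1).
Hypothesis P_rowS : forall j, (1 <= j <= n)%N -> P (E (n + 1) j).

Lemma P_lower_block p q : (n + 1 <= p <= 2 * n)%N -> (n + 1 <= q <= 2 * n)%N ->
  p != q -> P (E p q).
Proof.
move=> hp hq hpq.
rewrite -(@brmx_Eu_chain _ _ p 1 q); [|lia|lia|lia|by rewrite eq_sym].
apply: Pbr.
  by have := P_col1 (j := p - n) ltac:(lia); have -> : (n + (p - n))%N = p by lia.
by have := P_row1 (j := q - n) ltac:(lia); have -> : (n + (q - n))%N = q by lia.
Qed.

Lemma P_upper_block p q : (1 <= p <= n)%N -> (1 <= q <= n)%N -> p != q ->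
  P (E p q).
Proof.
move=> hp hq hpq.
rewrite -(@brmx_Eu_chain _ _ p (n + 1) q); [|lia|lia|lia|by rewrite eq_sym].
by apply: Pbr; [apply: P_colS | apply: P_rowS].
Qed.

Lemma P_offdiag p q : (1 <= p <= 2 * n)%N -> (1 <= q <= 2 * n)%N -> p != q ->
  P (E p q).
Proof.
move=> hp hq hpq.
case: (leqP p n) => hpn; case: (leqP q n) => hqn.
- by apply: P_upper_block => //; lia.
- case: (q =P n + 1) => [->|/eqP hq1]; first by apply: P_colS; lia.
  rewrite -(@brmx_Eu_chain _ _ p (n + 1) q); [|lia|lia|lia|apply/eqP; lia].
  apply: Pbr; first by apply: P_colS; lia.
  by apply: P_lower_block; rewrite 1?eq_sym; lia.
- case: (p =P n + 1) => [->|/eqP hp1]; first by apply: P_rowS; lia.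
  rewrite -(@brmx_Eu_chain _ _ p (n + 1) q); [|lia|lia|lia|apply/eqP; lia].
  by apply: Pbr; [apply: P_lower_block; lia | apply: P_rowS; lia].
- by apply: P_lower_block => //; lia.
Qed.

End OffDiagonal.

Hypothesis P_Eu : forall p q, (1 <= p <= 2 * n)%N -> (1 <= q <= 2 * n)%N ->
  p != q -> P (E p q).

Lemma P_diag_diff p q : (1 <= p <= 2 * n)%N -> (1 <= q <= 2 * n)%N -> p != q ->
  P (E p p - E q q).
Proof.
move=> hp hq hpq; have -> : E p p - E q q = brmx (E p q) (E q p).
  by rewrite brmx_Eu // !eqxx !scale1r.
by apply: Pbr; apply: P_Eu => //; rewrite eq_sym.
Qed.

Lemma P_traceless (A : 'M[R[i]]_(2 * n)) : (0 < n)%N -> \tr A = 0 -> P A.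
Proof.
move=> n_gt0 trA; have dim_gt0 : (0 < 2 * n)%N by lia.
pose i0 : 'I_(2 * n) := Ordinal dim_gt0.
pose D (i j : 'I_(2 * n)) : 'M[R[i]]_(2 * n) :=
  delta_mx i j - (i == j)%:R *: delta_mx i0 i0.
have -> : A = \sum_i \sum_j A i j *: D i j.
  have diag0 : \sum_i \sum_j A i j *: ((i == j)%:R *: delta_mx i0 i0) = 0.
    rewrite (eq_bigr (fun i => A i i *: delta_mx i0 i0)); last first.
      move=> i _; rewrite (bigD1 i) //= eqxx scale1r big1 ?addr0 // => j.
      by rewrite eq_sym => /negbTE ->; rewrite scale0r scaler0.
    by rewrite -scaler_suml -[X in X *: _]/(\tr A) trA scale0r.
  under eq_bigr do under eq_bigr do rewrite scalerBr.
  under eq_bigr do rewrite sumrB.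
  by rewrite sumrB diag0 subr0 -matrix_sum_delta.
apply: (big_ind P) => // i _; apply: (big_ind P) => // j _; apply: PZ.
have ord_neq (u v : 'I_(2 * n)) : u != v -> u.+1 != v.+1 by rewrite eqSS.
rewrite /D; case: (i =P j) => [<-|/eqP hij].
  rewrite scale1r; case: (i =P i0) => [->|/eqP hi0]; first by rewrite subrr.
  rewrite !delta_mxE; apply: P_diag_diff; last exact: ord_neq.
    by have := ltn_ord i; lia.
  by have := ltn_ord i0; lia.
rewrite scale0r subr0 delta_mxE; apply: P_Eu; last exact: ord_neq.
  by have := ltn_ord i; lia.
by have := ltn_ord j; lia.
Qed.

End SlGeneration.

Section PsiSurjective.
Variables (R : realType) (n K : nat) (a : 'I_K -> R[i]).
Hypothesis n_ge2 : (2 <= n)%N.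
Hypothesis a_neq0 : forall k, a k != 0.
Hypothesis a_sep : forall k j, k != j -> a k != a j /\ a k != (a j)^-1.
Hypothesis a_neq_pm1 : forall k, a k != 1 /\ a k != -1.
Local Notation C := (R[i]).
Local Notation M := 'M[C]_(2 * n).
Local Notation FM := {ffun 'I_K -> M}.
Local Notation E := (@Eu R n).
Local Notation L := (@psi_image R n K a).
Local Notation G := (@psi_gens R n K a).
Local Notation gen_at := (gen_at G).

Lemma L_psi_e i : (1 <= i <= n)%N -> L [ffun k => psi_e n (a k) i].
Proof. by move=> hi; apply: lie_gen_base; exists i => //; apply: Or31. Qed.

Lemma L_psi_f i : (1 <= i <= n)%N -> L [ffun k => psi_f n (a k) i].
Proof. by move=> hi; apply: lie_gen_base; exists i => //; apply: Or32. Qed.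

Lemma gen_at_psi_e_l k A i : (1 <= i <= n)%N -> gen_at k A ->
  gen_at k (brmx (psi_e n (a k) i) A).
Proof. by move=> hi hA; have := gen_at_brl hA (L_psi_e hi); rewrite ffunE. Qed.

Lemma gen_at_psi_f_l k A i : (1 <= i <= n)%N -> gen_at k A ->
  gen_at k (brmx (psi_f n (a k) i) A).
Proof. by move=> hi hA; have := gen_at_brl hA (L_psi_f hi); rewrite ffunE. Qed.

Lemma gen_at_psi_e_r k A i : (1 <= i <= n)%N -> gen_at k A ->
  gen_at k (brmx A (psi_e n (a k) i)).
Proof. by move=> hi hA; have := gen_at_brr hA (L_psi_e hi); rewrite ffunE. Qed.

Lemma gen_at_psi_f_r k A i : (1 <= i <= n)%N -> gen_at k A ->
  gen_at k (brmx A (psi_f n (a k) i)).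
Proof. by move=> hi hA; have := gen_at_brr hA (L_psi_f hi); rewrite ffunE. Qed.

Lemma L_chain_e m : (1 <= m <= n)%N -> L [ffun k => chain_e n (a k) m].
Proof.
move: m; apply: (range_ind_down (P := fun m => L [ffun k => chain_e n (a k) m])).
  rewrite (_ : [ffun k => _] = [ffun k => psi_e n (a k) n]).
    by apply: L_psi_e; lia.
  by apply/ffunP => k; rewrite !ffunE psi_e_last.
move=> m hm IH; have := lie_gen_br (L_psi_e (i := m) ltac:(lia)) IH.
by congr lie_gen; apply/ffunP => k; rewrite lie_brE !ffunE brmx_psi_e_chain.
Qed.

Lemma L_chain_f m : (1 <= m <= n)%N -> L [ffun k => chain_f n (a k) m].
Proof.
move: m; apply: (range_ind_down (P := fun m => L [ffun k => chain_f n (a k) m])).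
  rewrite (_ : [ffun k => _] = [ffun k => psi_f n (a k) n]).
    by apply: L_psi_f; lia.
  by apply/ffunP => k; rewrite !ffunE psi_f_last.
move=> m hm IH; have := lie_gen_br IH (L_psi_f (i := m) ltac:(lia)).
by congr lie_gen; apply/ffunP => k; rewrite lie_brE !ffunE brmx_chain_psi_f.
Qed.

Definition coef_e k : C := 1 + (a k)^-1.
Definition coef_f k : C := 1 + a k.
Definition weight k : C := 2%:R * (coef_e k * coef_f k).

Definition Xe : FM := [ffun k => coef_e k *: sl2_e R n].
Definition Xf : FM := [ffun k => coef_f k *: sl2_f R n].

Lemma L_Xe : L Xe.
Proof.
have := L_chain_e (m := 1) ltac:(lia).
by congr lie_gen; apply/ffunP => k; rewrite !ffunE chain_e1.
Qed.

Lemma L_Xf : L Xf.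
Proof.
have := L_chain_f (m := 1) ltac:(lia).
by congr lie_gen; apply/ffunP => k; rewrite !ffunE chain_f1.
Qed.

Lemma coef_e_neq0 k : coef_e k != 0.
Proof.
rewrite /coef_e addrC addr_eq0 -invrN1; apply: contra (a_neq_pm1 k).2.
by move/eqP/invr_inj->.
Qed.

Lemma coef_f_neq0 k : coef_f k != 0.
Proof. by rewrite /coef_f addrC addr_eq0; exact: (a_neq_pm1 k).2. Qed.

Lemma weight_inj k j : k != j -> weight k != weight j.
Proof.
move=> hkj; have [ak_aj ak_ajV] := a_sep hkj.
have hk := a_neq0 k; have hj := a_neq0 j.
have weightB : (a k - a j) * (a k * a j - 1) =
    a k * a j * 2%:R^-1 * (weight k - weight j).
  by rewrite /weight /coef_e /coef_f; field; rewrite hj hk.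
rewrite -subr_eq0; apply/negP => /eqP weight_eq.
move: weightB; rewrite weight_eq mulr0 => /eqP.
rewrite mulf_eq0 !subr_eq0 (negbTE ak_aj) /= => /eqP akaj1.
by move/eqP: ak_ajV; apply; rewrite -[a k](mulfK hj) akaj1 mul1r.
Qed.

Lemma L_weight_poly (p : {poly C}) :
  L [ffun k => (p.[weight k] * coef_e k) *: sl2_e R n].
Proof.
elim/poly_ind: p => [|p c IH].
  rewrite (_ : [ffun k => _] = 0); first exact: lie_gen_zero.
  by apply/ffunP => k; rewrite !ffunE horner0 mul0r scale0r.
have := lie_gen_add (lie_gen_br (lie_gen_br L_Xe L_Xf) IH) (lie_gen_scale c L_Xe).
congr lie_gen; apply/ffunP => k; rewrite [LHS]ffunE !lie_brE !ffunE hornerMXaddC.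
rewrite !(brmxZl, brmxZr) brmx_sl2_ef; last lia.
rewrite ?(brmxZl, brmxZr) brmx_sl2_he; last lia.
by rewrite !scalerA -scalerDl; congr (_ *: _); rewrite /weight; ring.
Qed.

Lemma gen_at_sl2_e k : gen_at k (sl2_e R n).
Proof.
pose P := \prod_(j | j != k) (weight k - weight j).
pose p := (coef_e k * P)^-1 *: \prod_(j | j != k) ('X - (weight j)%:P).
have P_neq0 : P != 0.
  by apply/prodf_neq0 => j hj; rewrite subr_eq0 weight_inj // eq_sym.
have := L_weight_poly p; congr lie_gen.
apply/ffunP => j; rewrite !ffunE hornerZ horner_prod.
under eq_bigr do rewrite hornerXsubC.
case: (j =P k) => [->|/eqP hjk].
  by rewrite -/P -mulrA (mulrC P) mulVf ?scale1r // mulf_neq0 // coef_e_neq0.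
by rewrite (bigD1 j) //= subrr mul0r mulr0 mul0r scale0r.
Qed.

Lemma gen_at_sl2_h k : gen_at k (sl2_h R n).
Proof.
have := gen_at_brr (gen_at_sl2_e k) L_Xf.
rewrite ffunE brmxZr brmx_sl2_ef; last lia.
exact/gen_atZ_inv/coef_f_neq0.
Qed.

Lemma gen_at_sl2_f k : gen_at k (sl2_f R n).
Proof.
have := gen_at_brr (gen_at_sl2_h k) L_Xf.
rewrite ffunE brmxZr brmx_sl2_hf; last lia.
rewrite scalerN scalerA -scaleNr; apply: gen_atZ_inv.
by rewrite oppr_eq0 mulf_neq0 ?coef_f_neq0 ?pnatr_eq0.
Qed.

Lemma gen_at_cross_e k j : (2 <= j <= n)%N -> gen_at k (cross_e R n j).
Proof.
move: j; apply: (range_ind_up (P := fun j => gen_at k (cross_e R n j))).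
  rewrite -(brmx_psi_f_sl2_e (a k)) //.
  by apply: gen_at_psi_f_l (gen_at_sl2_e k); lia.
move=> m hm IH; rewrite -(brmx_psi_f_cross (a k)) //.
by apply: gen_at_psi_f_l IH; lia.
Qed.

Lemma gen_at_cross_f k j : (2 <= j <= n)%N -> gen_at k (cross_f R n j).
Proof.
move: j; apply: (range_ind_up (P := fun j => gen_at k (cross_f R n j))).
  rewrite -(brmx_sl2_f_psi_e (a k)) //.
  by apply: gen_at_psi_e_r (gen_at_sl2_f k); lia.
move=> m hm IH; rewrite -(brmx_cross_psi_e (a k)) //.
by apply: gen_at_psi_e_r IH; lia.
Qed.

(* [cross_e n] and [[sl2_h, psi_e n]] differ only in the coefficient of
   [E 1 (n + n)], which is [1] versus [a^-1]; hence [a != 1] separates them. *)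
Lemma gen_at_corners_e k : gen_at k (E 1 (n + n)) /\ gen_at k (E n (n + 1)).
Proof.
have cross := gen_at_cross_e k (j := n) ltac:(lia).
have := gen_at_psi_e_r (i := n) ltac:(lia) (gen_at_sl2_h k).
rewrite brmx_sl2_h_psi_e_last // => h_psi.
have corner : gen_at k (E 1 (n + n)).
  have := gen_atB cross h_psi.
  rewrite /cross_e [E n _ + _]addrC addrKA -{1}[E 1 _]scale1r -scalerBl.
  by apply: gen_atZ_inv; rewrite subr_eq0 eq_sym invr_eq1 (a_neq_pm1 k).1.
by split=> //; have := gen_atB cross corner; rewrite /cross_e addrK.
Qed.

Lemma gen_at_corners_f k : gen_at k (E (n + n) 1) /\ gen_at k (E (n + 1) n).
Proof.
have cross := gen_at_cross_f k (j := n) ltac:(lia).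
have := gen_at_psi_f_r (i := n) ltac:(lia) (gen_at_sl2_h k).
rewrite brmx_sl2_h_psi_f_last // => h_psi.
have corner : gen_at k (E (n + n) 1).
  have := gen_atD cross h_psi.
  rewrite /cross_f [E (n + 1) _ + _]addrC addrKA.
  rewrite -{1}[E (n + n) _]scale1r -scalerBl.
  by apply: gen_atZ_inv; rewrite subr_eq0 eq_sym (a_neq_pm1 k).1.
by split=> //; have := gen_atB cross corner; rewrite /cross_f addrK.
Qed.

Lemma gen_at_row1 k j : (1 <= j <= n)%N -> gen_at k (E 1 (n + j)).
Proof.
move: j; apply: (range_ind_down (P := fun j => gen_at k (E 1 (n + j)))).
  exact: (gen_at_corners_e k).1.
move=> j hj IH; rewrite -(brmx_psi_e_row1 (a k)) //.
by apply: gen_at_psi_e_l IH; lia.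
Qed.

Lemma gen_at_colS k j : (1 <= j <= n)%N -> gen_at k (E j (n + 1)).
Proof.
move: j; apply: (range_ind_down (P := fun j => gen_at k (E j (n + 1)))).
  exact: (gen_at_corners_e k).2.
move=> j hj IH; rewrite -(brmx_psi_e_colS (a k)) //.
by apply: gen_at_psi_e_l IH; lia.
Qed.

Lemma gen_at_col1 k j : (1 <= j <= n)%N -> gen_at k (E (n + j) 1).
Proof.
move: j; apply: (range_ind_down (P := fun j => gen_at k (E (n + j) 1))).
  exact: (gen_at_corners_f k).1.
move=> j hj IH; rewrite -[E _ _]opprK -(brmx_psi_f_col1 (a k)) //.
by apply/gen_atN; apply: gen_at_psi_f_l IH; lia.
Qed.

Lemma gen_at_rowS k j : (1 <= j <= n)%N -> gen_at k (E (n + 1) j).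
Proof.
move: j; apply: (range_ind_down (P := fun j => gen_at k (E (n + 1) j))).
  exact: (gen_at_corners_f k).2.
move=> j hj IH; rewrite -(brmx_rowS_psi_f (a k)) //.
by apply: gen_at_psi_f_r IH; lia.
Qed.

Lemma gen_at_traceless k (A : M) : \tr A = 0 -> gen_at k A.
Proof.
have := (gen_at0 G k, @gen_atD _ _ _ G k, @gen_atZ _ _ _ G k,
  @gen_at_br _ _ _ G k).
case=> -[] -[] P0 PD PZ Pbr.
move=> trA; apply: (P_traceless P0 PD PZ Pbr _ _ trA); last lia.
exact: (P_offdiag Pbr (gen_at_row1 k) (gen_at_colS k) (gen_at_col1 k)
  (gen_at_rowS k)).
Qed.

End PsiSurjective.

Theorem lemma5p1 (R : realType) (n K : nat) (a : 'I_K -> R[i]) :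
  (3 <= n)%N -> (1 <= K)%N ->
  (forall k, a k != 0) ->
  (forall k j, k != j -> a k != a j /\ a k != (a j)^-1) ->
  (forall k, a k != 1 /\ a k != -1) ->
  forall x : {ffun 'I_K -> 'M[R[i]]_(2 * n)},
    @sl_sum R n K x -> @psi_image R n K a x.
Proof.
move=> n_ge3 _ a_neq0 a_sep a_neq_pm1 x x_sl.
apply: lie_gen_components => k.
exact: (gen_at_traceless (ltnW n_ge3) a_neq0 a_sep a_neq_pm1 k (x_sl k)).
Qed.
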